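(* Let $R$ be a ring and $M$ a left $R$-module. Then $\xi(M)$ is hollow in $R\text{-}\mathrm{Tors}$ if and only if the set $\{\chi(M/N)\mid N\subsetneq M\text{ a submodule}\}$ is directed (any two members have an upper bound in the set).
   Context: $R\text{-}\mathrm{Tors}$ is the lattice of hereditary torsion theories on left $R$-modules, ordered by $\tau\leq\sigma$ iff the torsion class $\mathbb{T}_\tau\subseteq\mathbb{T}_\sigma$; $\bigwedge U$ is the theory with torsion class $\bigcap_{\tau\in U}\mathbb{T}_\tau$ and $\bigvee U$ the theory with torsionfree class $\bigcap_{\tau\in U}\mathbb{F}_\tau$. $\xi(M)$ is the least torsion theory for which $M$ is torsion, $\chi(M)$ the greatest for which $M$ is torsionfree. An element $\tau$ is hollow in $R\text{-}\mathrm{Tors}$ if it is irreducible in the dual lattice, i.e. for all $\alpha,\beta\leq\tau$ with $\tau\leq\alpha\vee\beta$ one has $\tau\leq\alpha$ or $\tau\leq\beta$. *)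

From HB Require Import structures.
From mathcomp Require Import all_boot all_order all_algebra.
Set Implicit Arguments. Unset Strict Implicit. Unset Printing Implicit Defensive.
Import GRing.Theory.
Local Open Scope ring_scope.

Section TorsDefs.
Variable R : pzRingType.

Definition modclass := lmodType R -> Prop.

Definition hom_zero (M N : lmodType R) : Prop :=
  forall (f : {linear M -> N}) (x : M), f x = 0.

Definition leftorth (F : modclass) : modclass :=
  fun M => forall N : lmodType R, F N -> hom_zero M N.
Definition rightorth (T : modclass) : modclass :=
  fun N => forall M : lmodType R, T M -> hom_zero M N.

Record tpair := Tpair { tT : modclass; tF : modclass }.

(* (T, F) is a torsion theory: T = {M | Hom(M,F)=0}, F = {N | Hom(T,N)=0};
   hereditary: T closed under submodules (= injective linear maps into M). *)
Definition is_htt (t : tpair) : Prop :=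
  (forall M, tT t M <-> leftorth (tF t) M) /\
  (forall N, tF t N <-> rightorth (tT t) N) /\
  (forall (N M : lmodType R) (f : {linear N -> M}),
      injective f -> tT t M -> tT t N).

Definition tors_le (t s : tpair) : Prop := forall M, tT t M -> tT s M.

Definition tors_join (a b : tpair) : tpair :=
  let F := fun N => tF a N /\ tF b N in Tpair (leftorth F) F.

(* xi(M): meet of all hereditary torsion theories for which M is torsion
   (torsion class = intersection of their torsion classes) *)
Definition xi (M : lmodType R) : tpair :=
  let T := fun N => forall t, is_htt t -> tT t M -> tT t N in
  Tpair T (rightorth T).

(* chi(M): join of all hereditary torsion theories for which M is
   torsionfree (torsionfree class = intersection of their torsionfree classes) *)
Definition chi (M : lmodType R) : tpair :=
  let F := fun N => forall t, is_htt t -> tF t M -> tF t N in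
  Tpair (leftorth F) F.

(* hollow = irreducible in the dual lattice *)
Definition hollow (t : tpair) : Prop :=
  forall a b, is_htt a -> is_htt b -> tors_le a t -> tors_le b t ->
    tors_le t (tors_join a b) -> tors_le t a \/ tors_le t b.

(* (Q, p) presents the quotient M/N: p surjective linear with kernel N *)
Definition is_quotient (M : lmodType R) (N : M -> Prop) (Q : lmodType R)
  (p : {linear M -> Q}) : Prop :=
  (forall q : Q, exists x : M, p x = q) /\ (forall x : M, p x = 0 <-> N x).

Definition proper_sub (M : lmodType R) (N : M -> Prop) : Prop :=
  exists x : M, ~ N x.

Definition quot_chi_directed (M : lmodType R) : Prop :=
  forall (N1 : M -> Prop) (Q1 : lmodType R) (p1 : {linear M -> Q1})
         (N2 : M -> Prop) (Q2 : lmodType R) (p2 : {linear M -> Q2}),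
    proper_sub N1 -> is_quotient N1 p1 ->
    proper_sub N2 -> is_quotient N2 p2 ->
    exists (N3 : M -> Prop) (Q3 : lmodType R) (p3 : {linear M -> Q3}),
      [/\ proper_sub N3, is_quotient N3 p3,
          tors_le (chi Q1) (chi Q3) & tors_le (chi Q2) (chi Q3)].

End TorsDefs.

(* A module [M] fails to be torsion for a hereditary theory [a] exactly when
   some proper quotient [M/N] is [a]-torsionfree, and [chi(M/N) <= chi(M/N')]
   means that [M/N'] is torsionfree for every theory for which [M/N] is.
   Directedness thus merges an [a]-torsionfree and a [b]-torsionfree proper
   quotient into one that is torsionfree for [a \/ b], so [M] cannot be
   [a \/ b]-torsion unless it is [a]- or [b]-torsion.  Conversely, test
   hollowness on [a = chi(M/N1) /\ xi(M)] and [b = chi(M/N2) /\ xi(M)]: a proper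
   quotient of [M] that is torsionfree for [a \/ b] is torsionfree for
   [chi(M/N1)] and [chi(M/N2)], which gives the missing upper bound.
   The join of hereditary theories, computed on torsionfree classes, is again
   hereditary; lacking injective hulls, this is shown by a Zorn argument. *)

From Pilot Require Import Defs.
From HB Require Import structures.
From mathcomp Require Import all_boot all_order all_algebra.
From mathcomp Require Import boolp classical_sets.
Set Implicit Arguments. Unset Strict Implicit. Unset Printing Implicit Defensive.
Import GRing.Theory.
Local Open Scope ring_scope.
Local Open Scope classical_set_scope.

Section Submodules.
Variables (R : pzRingType) (V : lmodType R).

Definition submod (A : set V) := A 0 /\ forall r x y, A x -> A y -> A (r *: x + y).

Record submodule := Submodule {
  submodule_set :> V -> Prop;
  submoduleP : submod submodule_set }.

(* Membership is made boolean through [asbool] so that MathComp's subtypes and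
   quotients by [submodClosed] predicates apply to Prop-valued submodules. *)
Definition pred_of_submodule (S : submodule) : {pred V} := fun x => `[< S x >].

Lemma pred_of_submodule_closed (S : submodule) : submod_closed (pred_of_submodule S).
Proof.
case: S => A [A0 AD]; split; first exact/asboolP.
by move=> r x y /asboolP Ax /asboolP Ay; apply/asboolP; exact: (AD r x y).
Qed.

HB.instance Definition _ (S : submodule) := GRing.isSubmodClosed.Build R V
  (pred_of_submodule S) (GRing.submod_closed_semi (pred_of_submodule_closed S)).

Definition add_line (A : set V) (x : V) : set V :=
  fun y => exists a r, A a /\ y = a + r *: x.

Lemma submod_add_line A x : submod A -> submod (add_line A x).
Proof.
case=> A0 AD; split; first by exists 0, 0; rewrite scale0r addr0.
move=> r _ _ [a [s [Aa ->]]] [b [u [Ab ->]]].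
exists (r *: a + b), (r * s + u); split; first exact: AD.
by rewrite scalerDr scalerDl scalerA addrACA.
Qed.

Lemma sub_add_line A x : submod A -> A `<=` add_line A x.
Proof. by move=> _ a Aa; exists a, 0; rewrite scale0r addr0. Qed.

Lemma add_line_self A x : submod A -> add_line A x x.
Proof. by case=> A0 _; exists 0, 1; rewrite scale1r add0r. Qed.

(* Zorn is applied to possibly empty sets closed under [r *: x + y], so that the
   union of the empty chain is admissible. *)
Lemma submod_Zorn (Phi : set V -> Prop) :
  (forall C : set (set V), C `<=` Phi -> Phi (\bigcup_(A in C) A)) ->
  Phi [set 0] ->
  exists A : submodule, Phi A /\
    forall B : set V, submod B -> Phi B -> A `<=` B -> B `<=` A.
Proof.
move=> Phi_cup Phi0.
pose lin_closed (A : set V) := forall r x y, A x -> A y -> A (r *: x + y).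
have [A [[Alin PhiA] Amax]] : exists A, (lin_closed A /\ Phi A) /\
    forall B, A `<` B -> ~ (lin_closed B /\ Phi B).
  apply: Zorn_bigcup => C C_adm C_tot; split; last by apply: Phi_cup => B /C_adm[].
  move=> r x y [B CB Bx] [B' CB' By].
  have [BB'|B'B] := C_tot _ _ CB CB'.
  - by exists B' => //; apply: (C_adm _ CB').1 => //; exact: BB'.
  - by exists B => //; apply: (C_adm _ CB).1 => //; exact: B'B.
have [a Aa] : exists a, A a.
  apply: contrapT => A_empty; apply: (Amax [set 0]); last first.
    by split=> // r _ _ -> ->; rewrite scaler0 addr0.
  split=> [x Ax|]; first by case: A_empty; exists x.
  by move/(_ 0 erefl) => A0; apply: A_empty; exists 0.
have A0 : A 0 by have := Alin (-1) a a Aa Aa; rewrite scaleN1r addNr.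
exists (Submodule (conj A0 Alin)); split=> // B [_ Blin] PhiB AB.
by apply: contrapT => BA; apply: (Amax B).
Qed.

End Submodules.

Arguments submodule {R} V.

Section SubmoduleQuotient.
Variables (R : pzRingType) (V : lmodType R) (S : submodule V).

Inductive subm : predArgType := Subm (x : V) of x \in pred_of_submodule S.
Definition subm_val (w : subm) := let: Subm x _ := w in x.
HB.instance Definition _ := [isSub for subm_val].
HB.instance Definition _ := [Choice of subm by <:].
HB.instance Definition _ := [SubChoice_isSubLmodule of subm by <:].

Definition insubm (x : V) (Sx : S x) : subm := Subm (asboolT Sx).

Lemma subm_val_linear : linear subm_val. Proof. by []. Qed.
HB.instance Definition _ :=
  GRing.isLinear.Build R subm V *:%R subm_val subm_val_linear.

Lemma subm_valP (w : subm) : S (subm_val w).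
Proof. by case: w => x Sx; apply/asboolP. Qed.

Lemma subm_val_inj : injective subm_val.
Proof. exact: val_inj. Qed.

Local Open Scope quotient_scope.

Definition quotm := Quotient.quot (pred_of_submodule S).
HB.instance Definition _ := GRing.Zmodule.on quotm.

Definition quotm_scale r := lift_op1 quotm ( *:%R r).

Lemma pi_quotm_scale r : {morph \pi_quotm : x / r *: x >-> quotm_scale r x}.
Proof.
move=> x; unlock quotm_scale; apply/eqmodP; rewrite /= Quotient.equivE -scalerBr.
by rewrite rpredZ // Quotient.idealrBE reprK.
Qed.

Lemma quotm_scaleA a b q : quotm_scale a (quotm_scale b q) = quotm_scale (a * b) q.
Proof. by elim/quotW: q => x; rewrite -!pi_quotm_scale scalerA. Qed.

Lemma quotm_scale1 : left_id 1 quotm_scale.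
Proof. by elim/quotW => x; rewrite -pi_quotm_scale scale1r. Qed.

Lemma quotm_scaleDr : right_distributive quotm_scale +%R.
Proof.
move=> r p q; elim/quotW: p => x; elim/quotW: q => y.
by rewrite -raddfD -!pi_quotm_scale scalerDr raddfD.
Qed.

Lemma quotm_scaleDl q : {morph quotm_scale^~ q : a b / a + b}.
Proof.
by move=> a b; elim/quotW: q => x; rewrite -!pi_quotm_scale scalerDl raddfD.
Qed.

HB.instance Definition _ := GRing.Zmodule_isLmodule.Build R quotm
  quotm_scaleA quotm_scale1 quotm_scaleDr quotm_scaleDl.

Definition quotm_pi (x : V) : quotm := \pi x.

Lemma quotm_pi_linear : linear quotm_pi.
Proof.
by move=> r x y; rewrite /quotm_pi raddfD; congr (_ + _); exact: pi_quotm_scale.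
Qed.
HB.instance Definition _ :=
  GRing.isLinear.Build R V quotm *:%R quotm_pi quotm_pi_linear.

Lemma quotm_pi_surj (q : quotm) : exists x, quotm_pi x = q.
Proof. by exists (repr q); rewrite /quotm_pi reprK. Qed.

Lemma quotm_pi_eq0 x : quotm_pi x = 0 <-> S x.
Proof.
rewrite -(linear0 quotm_pi) /quotm_pi (rwP eqP) -Quotient.idealrBE subr0.
by split=> [/asboolP|?] //; apply/asboolP.
Qed.

End SubmoduleQuotient.

Arguments subm_val {R V S}.
Arguments insubm {R V} S x Sx.

Section Range.
Variables (R : pzRingType) (M X : lmodType R) (f : {linear M -> X}).

Lemma submod_range : submod (fun y : X => exists x, f x = y).
Proof.
split; first by exists 0; rewrite linear0.
by move=> r _ _ [x <-] [y <-]; exists (r *: x + y); rewrite linearP.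
Qed.

Definition range_submodule := Submodule submod_range.

Definition corestr (x : M) : subm range_submodule :=
  insubm range_submodule (f x) (ex_intro _ x erefl).

Lemma corestr_linear : linear corestr.
Proof. by move=> r x y; apply: subm_val_inj; rewrite /= linearP. Qed.
HB.instance Definition _ :=
  GRing.isLinear.Build R M (subm range_submodule) *:%R corestr corestr_linear.

Lemma corestr_surj (w : subm range_submodule) : exists x, corestr x = w.
Proof. by have [x fx] := subm_valP w; exists x; apply: subm_val_inj. Qed.

Lemma corestr_eq0 x : corestr x = 0 <-> f x = 0.
Proof.
split=> [/(congr1 (@subm_val _ _ _))//|fx0].
by apply: subm_val_inj; rewrite /= fx0.
Qed.

End Range.

Section LinearFactor.
Variables (R : pzRingType) (N Y Q X : lmodType R).
Variables (g : {linear Y -> Q}) (v : {linear N -> Q}) (f : {linear N -> X}).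

Lemma submod_preim_range : submod (fun y => exists n, g y = v n).
Proof.
split; first by exists 0; rewrite !linear0.
by move=> r y y' [n gn] [n' gn']; exists (r *: n + n'); rewrite !linearP gn gn'.
Qed.

Definition preim_range := Submodule submod_preim_range.

Lemma linear_factor : (forall n, v n = 0 -> f n = 0) ->
  exists phi : {linear subm preim_range -> X},
    forall w n, g (subm_val w) = v n -> phi w = f n.
Proof.
move=> ker_vf; pose phi (w : subm preim_range) := f (projT1 (cid (subm_valP w))).
have phiE w n : g (subm_val w) = v n -> phi w = f n.
  rewrite /phi; case: cid => m /= gm gn; apply/eqP; rewrite -subr_eq0 -linearB.
  by apply/eqP/ker_vf; rewrite linearB -gm -gn subrr.
have phi_lin : linear phi.
  move=> r w w'; have [n gn] := subm_valP w; have [n' gn'] := subm_valP w'.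
  rewrite (phiE w n gn) (phiE w' n' gn') (phiE _ (r *: n + n')) ?linearP //=.
  by rewrite gn gn'.
exists (HB.pack_for {linear subm preim_range -> X} phi
  (GRing.isLinear.Build R _ X *:%R phi phi_lin)).
exact: phiE.
Qed.

End LinearFactor.

Section TorsionTheories.
Variable R : pzRingType.
Implicit Types (t a b : tpair R) (M N Q W X Y Z : lmodType R).

Lemma htt_not_torsion t M : is_htt t -> ~ tT t M ->
  exists X (f : {linear M -> X}) x, tF t X /\ f x <> 0.
Proof.
case=> hT _ ntM; apply: contrapT => nf; apply/ntM/hT => X FX f x.
by apply: contrapT => fx; apply: nf; exists X, f, x.
Qed.

Lemma htt_not_torsionfree t Q : is_htt t -> ~ tF t Q ->
  exists Y (g : {linear Y -> Q}) y, tT t Y /\ g y <> 0.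
Proof.
case=> _ [hF _] nFQ; apply: contrapT => ng; apply/nFQ/hF => Y TY g y.
by apply: contrapT => gy; apply: ng; exists Y, g, y.
Qed.

Lemma htt_torsion_quotient t Y Z (p : {linear Y -> Z}) :
  is_htt t -> (forall z, exists y, p y = z) -> tT t Y -> tT t Z.
Proof.
case=> hT _ p_surj TY; apply/hT => W FW g z.
have [y <-] := p_surj z.
exact: ((hT Y).1 TY W FW (g \o p) y).
Qed.

Lemma htt_torsionfree_sub t W Z (i : {linear W -> Z}) :
  is_htt t -> injective i -> tF t Z -> tF t W.
Proof.
case=> _ [hF _] i_inj FZ; apply/hF => Y TY g y.
by apply: i_inj; rewrite linear0; exact: ((hF Z).1 FZ Y TY (i \o g) y).
Qed.

Lemma htt_xi M : is_htt (xi M).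
Proof.
rewrite /is_htt /xi /=; split; [|split] => [N|N|N N' f f_inj TN' t ht TM].
- split=> [TN X FX f x|TN t ht TM]; first exact: FX N TN f x.
  have [hT [hF _]] := ht; apply/hT => X FX; apply: TN => Y TY.
  exact: ((hF X).1 FX Y (TY t ht TM)).
- by [].
- by have [_ [_ hH]] := ht; exact: hH N N' f f_inj (TN' t ht TM).
Qed.

Definition tors_meet a b : tpair R :=
  let T := fun Y => tT a Y /\ tT b Y in Tpair T (rightorth T).

Lemma htt_meet a b : is_htt a -> is_htt b -> is_htt (tors_meet a b).
Proof.
move=> [hTa [hFa hHa]] [hTb [hFb hHb]].
rewrite /is_htt /tors_meet /=; split; [|split] => [N|N|N N' f f_inj [TaN' TbN']].
- split=> [TN X FX f x|TN]; first exact: FX N TN f x.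
  split; [apply/hTa => X FX|apply/hTb => X FX]; apply: TN => Y [TaY TbY].
    exact: ((hFa X).1 FX Y TaY).
  exact: ((hFb X).1 FX Y TbY).
- by [].
- by split; [exact: hHa N N' f f_inj TaN'|exact: hHb N N' f f_inj TbN'].
Qed.

(* [J], the image of [Y] in [I], is torsion for both [c] and [d]. *)
Lemma htt_meet_torsionfree c d I : is_htt c -> is_htt d -> tT d I ->
  tF (tors_meet c d) I -> tF c I.
Proof.
move=> hc hd TdI FI; have [hTc [hFc _]] := hc; apply/hFc => Y TcY g y.
pose J := subm (range_submodule g).
have TcJ : tT c J := htt_torsion_quotient hc (@corestr_surj _ _ _ g) TcY.
have TdJ : tT d J.
  by have [_ [_ hHd]] := hd; exact: hHd _ _ _ (@subm_val_inj _ _ _) TdI.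
exact: (FI J (conj TcJ TdJ) (subm_val : {linear J -> I}) (corestr g y)).
Qed.

Section JoinOfFamily.
Variables (S : tpair R -> Prop) (F : modclass R).
Hypothesis F_def : forall X, F X <-> forall t, S t -> is_htt t -> tF t X.

(* [A] is a submodule of [M] maximal with [h^-1(A) <= ker f]; a torsion
   submodule of [M / A] would give a map to [X] that cannot vanish. *)
Lemma leftorth_inter_hereditary N M (h : {linear N -> M}) :
  injective h -> leftorth F M -> leftorth F N.
Proof.
move=> h_inj TM X FX f n0; apply: contrapT => fn0.
pose Phi (B : set M) := forall n, B (h n) -> f n = 0.
have Phi_cup (C : set (set M)) : C `<=` Phi -> Phi (\bigcup_(B in C) B).
  by move=> CPhi n [B CB Bhn]; exact: CPhi B CB n Bhn.
have Phi0 : Phi [set 0].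
  move=> n /= hn0; rewrite (_ : n = 0) ?linear0 //.
  by apply: h_inj; rewrite hn0 linear0.
have [A [PhiA Amax]] := submod_Zorn Phi_cup Phi0.
pose p : {linear M -> quotm A} := quotm_pi A.
have ker_phf n : p (h n) = 0 -> f n = 0 by move/quotm_pi_eq0; exact: PhiA.
have nFQ : ~ F (quotm A) by move=> FQ; apply/fn0/ker_phf; exact: TM _ FQ p (h n0).
have [t [St ht nFtQ]] : exists t, [/\ S t, is_htt t & ~ tF t (quotm A)].
  apply: contrapT => nt; apply/nFQ/F_def => t St ht; apply: contrapT => nFtQ.
  by apply: nt; exists t.
have [Y [g [y [TY gy]]]] := htt_not_torsionfree ht nFtQ.
have [x0 px0] := quotm_pi_surj (g y).
have nAx0 : ~ A x0 by move/quotm_pi_eq0; rewrite [quotm_pi _ _]px0.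
have [n [[a [r [Aa hn]]] fn]] : exists n, add_line A x0 (h n) /\ f n <> 0.
  apply: contrapT => nn; apply/nAx0/(Amax (add_line A x0)).
  - exact/submod_add_line/submoduleP.
  - by move=> n Ahn; apply: contrapT => fn; apply: nn; exists n.
  - exact/sub_add_line/submoduleP.
  - exact/add_line_self/submoduleP.
have [phi phiE] := @linear_factor _ _ _ _ _ g (p \o h) f ker_phf.
have gry : g (r *: y) = p (h n).
  by rewrite hn linearD !linearZ /= px0 (proj2 (quotm_pi_eq0 A a) Aa) add0r.
have [hT [_ hH]] := ht.
pose W := preim_range g (p \o h).
have TW : tT t (subm W) by exact: hH _ _ subm_val (@subm_val_inj _ _ _) TY.
apply: fn; rewrite -(phiE (insubm W (r *: y) (ex_intro _ n gry)) n) //.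
exact: (hT _).1 TW X ((F_def X).1 FX t St ht) phi _.
Qed.

Lemma htt_leftorth_inter : is_htt (Tpair (leftorth F) F).
Proof.
rewrite /is_htt /=; split; [by []|split; last exact: leftorth_inter_hereditary].
move=> Z; split=> [FZ Y TY|FZ]; first exact: TY Z FZ.
apply/F_def => t St ht; have [hT [hF _]] := ht.
apply/hF => Y TY; apply: FZ => X FX.
exact: (hT Y).1 TY X ((F_def X).1 FX t St ht).
Qed.

End JoinOfFamily.

Lemma htt_chi Q : is_htt (chi Q).
Proof.
apply: (@htt_leftorth_inter (fun t => tF t Q)) => X.
by split=> FX t; [move=> FtQ ht|move=> ht FtQ]; exact: FX.
Qed.

Lemma htt_join a b : is_htt a -> is_htt b -> is_htt (tors_join a b).
Proof.
move=> ha hb; apply: (@htt_leftorth_inter (fun t => t = a \/ t = b)) => X.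
split=> [[FaX FbX] t [->|->] _ //|FX].
by split; apply: FX => //; [left|right].
Qed.

Lemma chi_leP I Q : tors_le (chi I) (chi Q) <-> tF (chi I) Q.
Proof.
split=> [le_IQ|FIQ Y /= TY Z FZ].
  have [_ [hF _]] := htt_chi I; apply/hF => Y /le_IQ TY.
  exact: TY Q (fun t _ FtQ => FtQ).
by apply: TY => t ht FtI; apply: FZ t ht (FIQ t ht FtI).
Qed.

Lemma proper_quotient_not_torsion t M (K : M -> Prop) Q (p : {linear M -> Q}) :
  is_htt t -> Defs.proper_sub K -> is_quotient K p -> tF t Q -> ~ tT t M.
Proof.
move=> [hT _] [x Kx] [_ kerp] FQ /hT TM.
by apply/Kx/kerp; exact: TM Q FQ p x.
Qed.

Lemma not_torsion_proper_quotient t M : is_htt t -> ~ tT t M ->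
  exists K Q (p : {linear M -> Q}), [/\ Defs.proper_sub K, is_quotient K p & tF t Q].
Proof.
move=> ht /(htt_not_torsion ht)[X [f [x [FX fx]]]].
exists (fun x => corestr f x = 0), _, (corestr f); split.
- by exists x => /corestr_eq0.
- by split=> [|//]; exact: corestr_surj.
- exact: htt_torsionfree_sub ht (@subm_val_inj _ _ _) FX.
Qed.

Lemma hollow_xi_directed M : hollow (xi M) -> quot_chi_directed M.
Proof.
move=> hol K1 Q1 p1 K2 Q2 p2 K1p p1q K2p p2q; apply: contrapT => nodir.
have TxiM : tT (xi M) M by move=> t.
pose a := tors_meet (chi Q1) (xi M); pose b := tors_meet (chi Q2) (xi M).
have ha : is_htt a := htt_meet (htt_chi Q1) (htt_xi M).
have hb : is_htt b := htt_meet (htt_chi Q2) (htt_xi M).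
have hab := htt_join ha hb.
have TabM : tT (tors_join a b) M.
  apply: contrapT => /(not_torsion_proper_quotient hab)[K [I [p [Kp pq [FaI FbI]]]]].
  have TxiI : tT (xi M) I := htt_torsion_quotient (htt_xi M) pq.1 TxiM.
  apply: nodir; exists K, I, p; split=> //; apply/chi_leP.
    exact: htt_meet_torsionfree (htt_chi Q1) (htt_xi M) TxiI FaI.
  exact: htt_meet_torsionfree (htt_chi Q2) (htt_xi M) TxiI FbI.
have [le_xa|le_xb] := hol a b ha hb (fun Y => @proj2 _ _) (fun Y => @proj2 _ _)
  (fun Y TY => TY _ hab TabM).
- have [TM _] := le_xa M TxiM.
  exact: proper_quotient_not_torsion (htt_chi Q1) K1p p1q (fun t _ FtQ => FtQ) TM.
- have [TM _] := le_xb M TxiM.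
  exact: proper_quotient_not_torsion (htt_chi Q2) K2p p2q (fun t _ FtQ => FtQ) TM.
Qed.

Lemma directed_hollow_xi M : quot_chi_directed M -> hollow (xi M).
Proof.
move=> dir a b ha hb _ _ le_join.
have TabM : tT (tors_join a b) M by apply: le_join; move=> t.
have [TaM|/(not_torsion_proper_quotient ha)[K1 [Q1 [p1 [K1p p1q FaQ1]]]]] :=
  EM (tT a M); first by left=> Y TY; exact: TY a ha TaM.
have [TbM|/(not_torsion_proper_quotient hb)[K2 [Q2 [p2 [K2p p2q FbQ2]]]]] :=
  EM (tT b M); first by right=> Y TY; exact: TY b hb TbM.
have [K3 [Q3 [p3 [K3p p3q /chi_leP le13 /chi_leP le23]]]] :=
  dir _ _ _ _ _ _ K1p p1q K2p p2q.
have FabQ3 : tF (tors_join a b) Q3 := conj (le13 a ha FaQ1) (le23 b hb FbQ2).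
by case: (proper_quotient_not_torsion (htt_join ha hb) K3p p3q FabQ3).
Qed.

End TorsionTheories.

Theorem theorem4p4 (R : pzRingType) (M : lmodType R) :
  hollow (xi M) <-> quot_chi_directed M.
Proof. by split; [exact: hollow_xi_directed|exact: directed_hollow_xi]. Qed.
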